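(* For any ideal $\mathcal{I}$ the following are equivalent: (i) $\mathcal{BI}\not\leq_K\mathcal{I}$; (ii) $\mathcal{BI}\not\leq_{KB}\mathcal{I}$; (iii) $\mathcal{BI}\not\sqsubseteq\mathcal{I}$; (iv) for every partition $(X_{(i,j)})_{(i,j)\in\omega^2}$ of $\bigcup\mathcal{I}$ into sets belonging to $\mathcal{I}$ there is $A\notin\mathcal{I}$ such that $A\cap X_{(i,j)}$ is finite for all $(i,j)\in\omega^2$ and $A\cap\bigcup_{j}X_{(i,j)}$ is finite for all but finitely many $i\in\omega$; (v) for every $f:\bigcup\mathcal{I}\to\omega^2$ there is $A\notin\mathcal{I}$ such that $f[A]\in\mathrm{Fin}^2$ and $f|A$ is either constant or finite-to-one.
   Context: An ideal on an infinite countable set $X$ is a family $\mathcal{I}\subseteq\mathcal{P}(X)$ closed under subsets and finite unions, containing all finite subsets, with $X\notin\mathcal{I}$; $\bigcup\mathcal{I}=X$. Partitions may have empty pieces. $\mathrm{Fin}^2$: ideal on $\omega^2$ of all $A$ with only finitely many $n$ such that $\{m:(n,m)\in A\}$ is infinite. $\mathcal{BI}$: ideal on $\omega^3$ of all $A$ for which there is $k$ with $\{(j,l):(i,j,l)\in A\}\in\mathrm{Fin}^2$ for $i<k$ and finite for $i\ge k$. For ideals $\mathcal{I},\mathcal{J}$: $\mathcal{I}\leq_K\mathcal{J}$ if there is a function $f:\bigcup\mathcal{J}\to\bigcup\mathcal{I}$ with $f^{-1}[A]\in\mathcal{J}$ for all $A\in\mathcal{I}$; $\mathcal{I}\leq_{KB}\mathcal{J}$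 if such an $f$ can be chosen finite-to-one; $\mathcal{I}\sqsubseteq\mathcal{J}$ if such an $f$ can be chosen bijective. *)

From Stdlib Require Import List Arith.
Import ListNotations.

Definition finite_set {X : Type} (A : X -> Prop) : Prop :=
  exists l : list X, forall x, A x -> In x l.

Definition countably_infinite (X : Type) : Prop :=
  exists e : nat -> X, (forall n m, e n = e m -> n = m) /\ (forall x, exists n, e n = x).

(* An ideal on X (with union X: all finite sets, in particular singletons, belong). *)
Definition is_ideal {X : Type} (I : (X -> Prop) -> Prop) : Prop :=
  (forall A B : X -> Prop, I B -> (forall x, A x -> B x) -> I A) /\
  (forall A B : X -> Prop, I A -> I B -> I (fun x => A x \/ B x)) /\
  (forall A : X -> Prop, finite_set A -> I A) /\
  ~ I (fun _ => True).

Definition Fin2 (A : nat * nat -> Prop) : Prop :=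
  finite_set (fun n => ~ finite_set (fun m => A (n, m))).

(* The ideal BI on omega^3 (triples encoded as (i, j, l) = ((i, j), l)). *)
Definition BI (A : nat * nat * nat -> Prop) : Prop :=
  exists k : nat,
    (forall i, i < k -> Fin2 (fun jl => A (i, fst jl, snd jl))) /\
    (forall i, k <= i -> finite_set (fun jl : nat * nat => A (i, fst jl, snd jl))).

Definition katetov_map {X Y : Type} (J : (Y -> Prop) -> Prop) (I : (X -> Prop) -> Prop)
  (f : X -> Y) : Prop :=
  forall A : Y -> Prop, J A -> I (fun x => A (f x)).

Definition finite_to_one {X Y : Type} (f : X -> Y) : Prop :=
  forall y, finite_set (fun x => f x = y).

Definition bijective_map {X Y : Type} (f : X -> Y) : Prop :=
  (forall x x', f x = f x' -> x = x') /\ (forall y, exists x, f x = y).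

Definition K_le {X Y : Type} (J : (Y -> Prop) -> Prop) (I : (X -> Prop) -> Prop) : Prop :=
  exists f : X -> Y, katetov_map J I f.

Definition KB_le {X Y : Type} (J : (Y -> Prop) -> Prop) (I : (X -> Prop) -> Prop) : Prop :=
  exists f : X -> Y, finite_to_one f /\ katetov_map J I f.

Definition sqle {X Y : Type} (J : (Y -> Prop) -> Prop) (I : (X -> Prop) -> Prop) : Prop :=
  exists f : X -> Y, bijective_map f /\ katetov_map J I f.

(* A partition of X indexed by omega^2 (pieces may be empty). *)
Definition is_partition {X Ix : Type} (P : Ix -> X -> Prop) : Prop :=
  (forall x, exists i, P i x) /\ (forall i i' x, P i x -> P i' x -> i = i').

From Stdlib Require Import List Arith Lia Classical ClassicalEpsilon.
From Stdlib Require Cantor.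
Import ListNotations.

(** Call [h : X -> omega^2] a BI-partition of [I] if its fibres lie in [I] and so does
   every set that meets each fibre finitely and all but finitely many rows finitely;
   (iv) and (v) both say that no BI-partition exists.  A Katetov map [f] into [omega^3]
   yields the BI-partition [fst o f]; conversely every injective lift of a BI-partition
   to [omega^3] is a Katetov map.  To make the lift bijective, first make all fibres
   infinite: if some row has infinitely many infinite fibres, spread them over [omega^2]
   by Cantor pairing; otherwise every row is in [I], infinitely many rows are infinite,
   and turning rows into fibres of a single row reduces to the first case.  Then
   [x |-> (h x, rank of x in its fibre)] is a bijection onto [omega^3]. *)

Lemma finite_set_subset {T} (A B : T -> Prop) :
  finite_set A -> (forall x, B x -> A x) -> finite_set B.
Proof. intros [l Hl] HBA. exists l. auto. Qed.

Lemma finite_set_empty {T} (A : T -> Prop) : (forall x, ~ A x) -> finite_set A.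
Proof. intros HA. exists []. intros x Hx. contradiction (HA x). Qed.

Lemma infinite_set_superset {T} (A B : T -> Prop) :
  ~ finite_set A -> (forall x, A x -> B x) -> ~ finite_set B.
Proof. intros HA HAB HB. apply HA. exact (finite_set_subset B A HB HAB). Qed.

Lemma finite_set_image {T U} (f : T -> U) (A : T -> Prop) :
  finite_set A -> finite_set (fun y => exists x, A x /\ f x = y).
Proof. intros [l Hl]. exists (map f l). intros y [x [Hx <-]]. apply in_map. auto. Qed.

Lemma finite_set_list_union {T U} (l : list U) (F : U -> T -> Prop) :
  (forall u, In u l -> finite_set (F u)) -> finite_set (fun x => exists u, In u l /\ F u x).
Proof.
  induction l as [|u l IH]; intros HF.
  - apply finite_set_empty. intros x [u [[] _]].
  - destruct (HF u (or_introl eq_refl)) as [l1 H1].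
    destruct IH as [l2 H2]; [intros v Hv; apply HF; right; exact Hv|].
    exists (l1 ++ l2). intros x [v [[<- | Hv] Hx]]; apply in_or_app; [left | right]; eauto.
Qed.

Lemma finite_set_preimage_inj {T U} (g : T -> U) (S : U -> Prop) :
  (forall x y, g x = g y -> x = y) -> finite_set S -> finite_set (fun x => S (g x)).
Proof.
  intros Hinj [l Hl].
  assert (Hpre : exists lx, forall x, In (g x) l -> In x lx).
  { clear Hl. induction l as [|y l [lx Hlx]].
    - exists []. intros x [].
    - destruct (classic (exists x0, g x0 = y)) as [[x0 <-] | Hy].
      + exists (x0 :: lx). intros x [Hx | Hx]; [left; apply Hinj | right]; auto.
      + exists lx. intros x [Hx | Hx]; [contradiction Hy; eauto | auto]. }
  destruct Hpre as [lx Hlx]. exists lx. auto.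
Qed.

Lemma finite_set_nat_bound (A : nat -> Prop) :
  finite_set A -> exists k, forall n, A n -> n < k.
Proof.
  intros [l Hl]. exists (S (list_max l)). intros n Hn.
  assert (Hmax : Forall (fun m => m <= list_max l) l) by (apply list_max_le; lia).
  rewrite Forall_forall in Hmax. specialize (Hmax n (Hl n Hn)). lia.
Qed.

Lemma infinite_set_nat_unbounded (A : nat -> Prop) :
  ~ finite_set A -> forall a, exists n, a <= n /\ A n.
Proof.
  intros HA a. apply NNPP. intros Hno. apply HA. exists (seq 0 a). intros n Hn.
  apply in_seq. split; [lia|]. destruct (le_lt_dec a n); [contradiction Hno; eauto | lia].
Qed.

Fixpoint count_below (P : nat -> Prop) (n : nat) : nat :=
  match n with
  | 0 => 0
  | S n => count_below P n + if excluded_middle_informative (P n) then 1 else 0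
  end.

Lemma count_below_monotone P n m : n <= m -> count_below P n <= count_below P m.
Proof. induction 1; simpl; lia. Qed.

Lemma count_below_lt P n m : P n -> n < m -> count_below P n < count_below P m.
Proof.
  intros Hn Hlt. pose proof (count_below_monotone P (S n) m Hlt) as Hle. simpl in Hle.
  destruct (excluded_middle_informative (P n)); [lia | contradiction].
Qed.

Lemma count_below_unbounded P : ~ finite_set P -> forall t, exists m, t < count_below P m.
Proof.
  intros HP t. induction t as [|t [m Hm]].
  - destruct (infinite_set_nat_unbounded P HP 0) as [n [_ Hn]].
    exists (S n). pose proof (count_below_lt P n (S n) Hn (Nat.lt_succ_diag_r n)). lia.
  - destruct (infinite_set_nat_unbounded P HP m) as [n [Hmn Hn]].
    exists (S n). pose proof (count_below_monotone P m n Hmn).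
    pose proof (count_below_lt P n (S n) Hn (Nat.lt_succ_diag_r n)). lia.
Qed.

Lemma count_below_fiber_finite P :
  ~ finite_set P -> forall t, finite_set (fun n => count_below P n = t).
Proof.
  intros HP t. destruct (count_below_unbounded P HP t) as [m Hm]. exists (seq 0 m).
  intros n Hn. apply in_seq. split; [lia|].
  destruct (le_lt_dec m n) as [Hmn | Hnm]; [|lia].
  pose proof (count_below_monotone P m n Hmn). lia.
Qed.

Lemma count_below_attains P :
  ~ finite_set P -> forall t, exists n, P n /\ count_below P n = t.
Proof.
  intros HP t. destruct (count_below_unbounded P HP t) as [m Hm].
  induction m as [|m IH]; simpl in Hm; [lia|].
  destruct (le_lt_dec (count_below P m) t); [|auto].
  destruct (excluded_middle_informative (P m)); [|lia].
  exists m. split; [assumption | lia].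
Qed.

Section Ideal.

Context {X : Type} {I : (X -> Prop) -> Prop}.
Context (HI : is_ideal I).

Lemma ideal_subset A B : I B -> (forall x, A x -> B x) -> I A.
Proof. destruct HI as [Hsub _]. exact (Hsub A B). Qed.

Lemma ideal_union A B : I A -> I B -> I (fun x => A x \/ B x).
Proof. destruct HI as [_ [Hun _]]. exact (Hun A B). Qed.

Lemma ideal_finite A : finite_set A -> I A.
Proof. destruct HI as [_ [_ [Hfin _]]]. exact (Hfin A). Qed.

Lemma ideal_proper A : (forall x, A x) -> ~ I A.
Proof.
  destruct HI as [_ [_ [_ Htop]]]. intros Hall HA. apply Htop.
  exact (ideal_subset _ A HA (fun x _ => Hall x)).
Qed.

Lemma ideal_list_union {U} (l : list U) (F : U -> X -> Prop) :
  (forall u, In u l -> I (F u)) -> I (fun x => exists u, In u l /\ F u x).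
Proof.
  induction l as [|u l IH]; intros HF.
  - apply ideal_finite, finite_set_empty. intros x [u [[] _]].
  - apply (ideal_subset _ _ (ideal_union _ _ (HF u (or_introl eq_refl))
                                              (IH (fun v Hv => HF v (or_intror Hv))))).
    intros x [v [[<- | Hv] Hx]]; [left | right]; eauto.
Qed.

Lemma ideal_preimage_finite {Y} (q : X -> Y) (S : Y -> Prop) :
  (forall y, I (fun x => q x = y)) -> finite_set S -> I (fun x => S (q x)).
Proof.
  intros Hfib [l Hl].
  apply (ideal_subset _ _ (ideal_list_union l (fun y x => q x = y) (fun y _ => Hfib y))).
  intros x Hx. exists (q x). auto.
Qed.

End Ideal.

Definition thin {X} (h : X -> nat * nat) (A : X -> Prop) : Prop :=
  (forall p, finite_set (fun x => A x /\ h x = p)) /\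
  finite_set (fun i => ~ finite_set (fun x => A x /\ fst (h x) = i)).

Definition BI_partition {X} (I : (X -> Prop) -> Prop) (h : X -> nat * nat) : Prop :=
  (forall p, I (fun x => h x = p)) /\ (forall A, thin h A -> I A).

Lemma finite_infinite_columns (B : nat * nat * nat -> Prop) k :
  (forall i, i < k -> Fin2 (fun jl => B (i, fst jl, snd jl))) ->
  finite_set (fun p => fst p < k /\ ~ finite_set (fun l => B (fst p, snd p, l))).
Proof.
  intros Hlow. apply finite_set_subset with
    (A := fun p => exists i, In i (seq 0 k) /\
            exists j, ~ finite_set (fun l => B (i, j, l)) /\ (i, j) = p).
  - apply finite_set_list_union. intros i Hi. apply finite_set_image.
    apply in_seq in Hi. exact (Hlow i ltac:(lia)).
  - intros [i j] [Hi Hj]. exists i. split; [apply in_seq; simpl in *; lia | eauto].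
Qed.

Section Katetov.

Context {X : Type} {I : (X -> Prop) -> Prop} (HI : is_ideal I).

Lemma katetov_BI_partition (f : X -> nat * nat * nat) :
  katetov_map BI I f -> BI_partition I (fun x => fst (f x)).
Proof.
  intros Hf. split.
  - intros [i j]. apply (Hf (fun y => fst y = (i, j))). exists (S i). split.
    + intros i' _. exists [j]. intros n Hn. left.
      destruct (Nat.eq_dec j n) as [| Hjn]; [assumption|].
      contradiction Hn. apply finite_set_empty. intros m Hm. injection Hm. auto.
    + intros i' Hi'. apply finite_set_empty. intros jl Hjl. injection Hjl. lia.
  - intros A [Hfib Hrows]. destruct (finite_set_nat_bound _ Hrows) as [k Hk].
    set (B := fun y => exists x, A x /\ f x = y).
    apply (ideal_subset HI _ (fun x => B (f x))); [apply Hf | intros x Hx; exists x; auto].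
    exists k. split.
    + intros i _. apply finite_set_empty. intros j Hj. apply Hj.
      apply finite_set_subset with
        (A := fun l => exists x, (A x /\ fst (f x) = (i, j)) /\ snd (f x) = l).
      * apply finite_set_image, Hfib.
      * intros l [x [Hx Hfx]]. exists x. rewrite Hfx. auto.
    + intros i Hki.
      assert (Hrow : finite_set (fun x => A x /\ fst (fst (f x)) = i)).
      { apply NNPP. intros Hinf. specialize (Hk i Hinf). lia. }
      apply finite_set_subset with
        (A := fun jl => exists x, (A x /\ fst (fst (f x)) = i) /\
                                  (snd (fst (f x)), snd (f x)) = jl).
      * apply finite_set_image, Hrow.
      * intros [j l] [x [Hx Hfx]]. exists x. rewrite Hfx. auto.
Qed.

(* An injective lift [g] of [q] to [omega^3] is a Katetov map: the finitely many
   infinite columns of a set in [BI] lie in finitely many fibres of [q], and the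
   rest of its preimage is thin. *)
Lemma BI_partition_katetov (q : X -> nat * nat) (g : X -> nat * nat * nat) :
  BI_partition I q -> (forall x y, g x = g y -> x = y) -> (forall x, fst (g x) = q x) ->
  katetov_map BI I g.
Proof.
  intros [Hfib Hthin] Hinj Hg B [k [Hlow Hhigh]].
  assert (Hgx : forall x, g x = (q x, snd (g x))).
  { intros x. rewrite <- Hg. apply surjective_pairing. }
  set (S := fun p : nat * nat => fst p < k /\ ~ finite_set (fun l => B (fst p, snd p, l))).
  assert (HS : finite_set S) by exact (finite_infinite_columns B k Hlow).
  assert (Hrest : I (fun x => B (g x) /\ ~ S (q x))).
  { apply Hthin. split.
    - intros [i j].
      destruct (classic (S (i, j))) as [Hij | Hij].
      { apply finite_set_empty. intros x [[_ Hx] Hq]. rewrite Hq in Hx. auto. }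
      assert (Hcol : finite_set (fun l => B (i, j, l))).
      { destruct (le_lt_dec k i) as [Hki | Hik].
        - apply finite_set_subset with (A := fun l => exists jl,
              B (i, fst jl, snd jl) /\ snd jl = l).
          + apply finite_set_image, Hhigh, Hki.
          + intros l Hl. exists (j, l). auto.
        - apply NNPP. intros Hinf. apply Hij. split; assumption. }
      set (C := fun y => exists l, B (i, j, l) /\ (i, j, l) = y).
      apply finite_set_subset with (A := fun x => C (g x)).
      + exact (finite_set_preimage_inj g C Hinj (finite_set_image _ _ Hcol)).
      + intros x [[Hx _] Hq]. exists (snd (g x)). rewrite <- Hq, <- Hgx. auto.
    - exists (seq 0 k). intros i Hi. apply in_seq. split; [lia|].
      destruct (le_lt_dec k i) as [Hki | Hik]; [exfalso | exact Hik].
      set (C := fun y => exists jl, B (i, fst jl, snd jl) /\ (i, fst jl, snd jl) = y).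
      apply Hi. apply finite_set_subset with (A := fun x => C (g x)).
      + exact (finite_set_preimage_inj g C Hinj (finite_set_image _ _ (Hhigh i Hki))).
      + intros x [[Hx _] Hq]. exists (snd (q x), snd (g x)). simpl.
        rewrite <- Hq, <- surjective_pairing, <- Hgx. auto. }
  apply (ideal_subset HI _ _ (ideal_union HI _ _ (ideal_preimage_finite HI q S Hfib HS) Hrest)).
  intros x Hx. destruct (classic (S (q x))); [left | right]; auto.
Qed.

End Katetov.

Section Reshape.

Context {X : Type} {I : (X -> Prop) -> Prop} (HI : is_ideal I).

Lemma BI_partition_row_ideal (h : X -> nat * nat) a :
  BI_partition I h -> finite_set (fun b => ~ finite_set (fun x => h x = (a, b))) ->
  I (fun x => fst (h x) = a).
Proof.
  intros [Hfib Hthin] [lb Hlb].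
  set (S := fun p : nat * nat => fst p = a /\ In (snd p) lb).
  assert (HS : finite_set S).
  { exists (map (pair a) lb). intros [a' b] [Ha Hb]. simpl in *. subst a'. apply in_map, Hb. }
  assert (Hrest : I (fun x => fst (h x) = a /\ ~ In (snd (h x)) lb)).
  { apply Hthin. split.
    - intros [a' b]. destruct (classic (finite_set (fun x => h x = (a', b)))) as [Hfin | Hinf].
      + apply (finite_set_subset _ _ Hfin). intros x [_ Hx]. exact Hx.
      + apply finite_set_empty. intros x [[Ha Hb] Hx]. rewrite Hx in Ha, Hb. simpl in *.
        subst a'. apply Hb, Hlb, Hinf.
    - exists [a]. intros a' Ha'. left. apply NNPP. intros Hne. apply Ha'.
      apply finite_set_empty. intros x [[Hx _] Hx']. congruence. }
  apply (ideal_subset HI _ _ (ideal_union HI _ _ (ideal_preimage_finite HI h S Hfib HS) Hrest)).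
  intros x Hx. destruct (classic (In (snd (h x)) lb)); [left | right]; split; auto.
Qed.

Lemma BI_partition_infinite_rows (h : X -> nat * nat) :
  BI_partition I h -> (forall a, I (fun x => fst (h x) = a)) ->
  ~ finite_set (fun a => ~ finite_set (fun x => fst (h x) = a)).
Proof.
  intros [_ Hthin] Hrow HS.
  set (S := fun a => ~ finite_set (fun x => fst (h x) = a)) in HS.
  assert (Hrow_finite : forall a, ~ S a -> finite_set (fun x => fst (h x) = a))
    by (intros a Ha; apply NNPP, Ha).
  apply (ideal_proper HI (fun x => S (fst (h x)) \/ ~ S (fst (h x)))); [intros x; apply classic|].
  apply (ideal_union HI).
  - exact (ideal_preimage_finite HI (fun x => fst (h x)) S Hrow HS).
  - apply Hthin. split.
    + intros p. destruct (classic (S (fst p))) as [Hp | Hp].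
      * apply finite_set_empty. intros x [Hx Hxp]. rewrite Hxp in Hx. auto.
      * apply (finite_set_subset _ _ (Hrow_finite _ Hp)). intros x [_ Hxp]. rewrite Hxp. auto.
    + apply finite_set_empty. intros a Ha. apply Ha. destruct (classic (S a)) as [Sa | Sa].
      * apply finite_set_empty. intros x [Hx Hxa]. rewrite Hxa in Hx. auto.
      * apply (finite_set_subset _ _ (Hrow_finite _ Sa)). intros x [_ Hxa]. exact Hxa.
Qed.

Lemma BI_partition_collapse_rows (h : X -> nat * nat) :
  BI_partition I h -> (forall a, I (fun x => fst (h x) = a)) ->
  BI_partition I (fun x => (0, fst (h x))).
Proof.
  intros [_ Hthin] Hrow. split.
  - intros [a b]. destruct (Nat.eq_dec a 0) as [-> | Ha].
    + apply (ideal_subset HI _ _ (Hrow b)). intros x Hx. injection Hx. auto.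
    + apply (ideal_finite HI), finite_set_empty. intros x Hx. injection Hx. auto.
  - intros A [HAfib _]. apply Hthin. split.
    + intros p. apply (finite_set_subset _ _ (HAfib (0, fst p))).
      intros x [Hx Hxp]. rewrite Hxp. auto.
    + apply finite_set_empty. intros a Ha. apply Ha.
      apply (finite_set_subset _ _ (HAfib (0, a))). intros x [Hx Hxa]. rewrite Hxa. auto.
Qed.

Lemma BI_partition_rich_row (h : X -> nat * nat) :
  BI_partition I h ->
  exists h' a, BI_partition I h' /\ ~ finite_set (fun b => ~ finite_set (fun x => h' x = (a, b))).
Proof.
  intros Hh.
  destruct (classic (exists a, ~ finite_set (fun b => ~ finite_set (fun x => h x = (a, b)))))
    as [[a Ha] | Hnone]; [eauto|].
  assert (Hrow : forall a, I (fun x => fst (h x) = a)).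
  { intros a. apply (BI_partition_row_ideal h a Hh). apply NNPP. eauto. }
  exists (fun x => (0, fst (h x))), 0.
  split; [exact (BI_partition_collapse_rows h Hh Hrow)|].
  apply (infinite_set_superset _ _ (BI_partition_infinite_rows h Hh Hrow)).
  intros b Hb Hfin. apply Hb. apply (finite_set_subset _ _ Hfin). intros x Hx. rewrite Hx. auto.
Qed.

(* Each new fibre is the union of at most two old ones. *)
Lemma BI_partition_spread_row (h : X -> nat * nat) a :
  BI_partition I h -> ~ finite_set (fun b => ~ finite_set (fun x => h x = (a, b))) ->
  exists q, BI_partition I q /\ forall p, ~ finite_set (fun x => q x = p).
Proof.
  intros [Hfib Hthin] Hrich.
  set (D := fun b => ~ finite_set (fun x => h x = (a, b))) in Hrich.
  set (Q := fun p : nat * nat =>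
    if excluded_middle_informative (fst p = a /\ D (snd p))
    then Cantor.of_nat (count_below D (snd p)) else p).
  exists (fun x => Q (h x)). split; [split|].
  - intros p.
    set (S := fun p' => p' = p \/ (fst p' = a /\ count_below D (snd p') = Cantor.to_nat p)).
    apply (ideal_subset HI _ (fun x => S (h x))).
    + apply (ideal_preimage_finite HI h S Hfib).
      destruct (count_below_fiber_finite D Hrich (Cantor.to_nat p)) as [lb Hlb].
      exists (p :: map (pair a) lb). intros [a' b] [<- | [Ha' Hb]]; [left; auto | right].
      simpl in *. subst a'. apply in_map, Hlb, Hb.
    + intros x Hx. unfold Q in Hx.
      destruct (excluded_middle_informative _) as [[Ha _] | _]; [right | left; exact Hx].
      split; [exact Ha|]. rewrite <- Hx, Cantor.cancel_to_of. reflexivity.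
  - intros A [HAfib [l Hl]]. apply Hthin. split.
    + intros p. apply (finite_set_subset _ _ (HAfib (Q p))). intros x [Hx Hxp]. rewrite Hxp. auto.
    + exists (a :: l). intros a' Ha'.
      destruct (Nat.eq_dec a a') as [| Hne]; [left; assumption | right].
      apply Hl, (infinite_set_superset _ _ Ha'). intros x [Hx Hxa]. split; [exact Hx|].
      unfold Q. destruct (excluded_middle_informative _) as [[Ha _] | _]; [congruence | exact Hxa].
  - intros p. destruct (count_below_attains D Hrich (Cantor.to_nat p)) as [b [Hb Hcount]].
    apply (infinite_set_superset _ _ Hb). intros x Hx. rewrite Hx. unfold Q. simpl.
    destruct (excluded_middle_informative _) as [_ | Hno]; [|contradiction Hno; auto].
    rewrite Hcount. apply Cantor.cancel_of_to.
Qed.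

End Reshape.

Lemma countable_enumeration {X} :
  countably_infinite X ->
  exists (e : X -> nat) (en : nat -> X), (forall n, e (en n) = n) /\ (forall x, en (e x) = x).
Proof.
  intros [en [Hinj Hsurj]].
  exists (fun x => proj1_sig (constructive_indefinite_description _ (Hsurj x))), en.
  assert (Hen : forall x, en (proj1_sig (constructive_indefinite_description _ (Hsurj x))) = x)
    by (intros x; exact (proj2_sig (constructive_indefinite_description _ (Hsurj x)))).
  split; [intros n; apply Hinj; rewrite Hen; reflexivity | exact Hen].
Qed.

Lemma fibrewise_rank_bijective {X} (q : X -> nat * nat) (e : X -> nat) (en : nat -> X) :
  (forall n, e (en n) = n) -> (forall x, en (e x) = x) ->
  (forall p, ~ finite_set (fun x => q x = p)) ->
  bijective_map (fun x => (q x, count_below (fun n => q (en n) = q x) (e x))).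
Proof.
  intros He Hen Hinf. split.
  - intros x y Hxy. injection Hxy as Hq Hcount. rewrite Hq in Hcount.
    destruct (lt_eq_lt_dec (e x) (e y)) as [[Hlt | Heq] | Hlt].
    + pose proof (count_below_lt (fun n => q (en n) = q y) (e x) (e y)) as Hrank.
      cbv beta in Hrank. rewrite Hen in Hrank. specialize (Hrank Hq Hlt). lia.
    + rewrite <- (Hen x), <- (Hen y), Heq. reflexivity.
    + pose proof (count_below_lt (fun n => q (en n) = q y) (e y) (e x)) as Hrank.
      cbv beta in Hrank. rewrite Hen in Hrank. specialize (Hrank eq_refl Hlt). lia.
  - intros [p l].
    assert (Hfibre : ~ finite_set (fun n => q (en n) = p)).
    { intros [ln Hln]. apply (Hinf p). exists (map en ln). intros x Hx.
      rewrite <- (Hen x). apply in_map, Hln. rewrite Hen. exact Hx. }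
    destruct (count_below_attains _ Hfibre l) as [n [Hn Hcount]].
    exists (en n). rewrite He, Hn, Hcount. reflexivity.
Qed.

Lemma BI_partition_sqle {X} {I : (X -> Prop) -> Prop} (h : X -> nat * nat) :
  countably_infinite X -> is_ideal I -> BI_partition I h -> sqle BI I.
Proof.
  intros HX HI Hh.
  destruct (BI_partition_rich_row HI h Hh) as [h' [a [Hh' Hrich]]].
  destruct (BI_partition_spread_row HI h' a Hh' Hrich) as [q [Hq Hinf]].
  destruct (countable_enumeration HX) as [e [en [He Hen]]].
  pose proof (fibrewise_rank_bijective q e en He Hen Hinf) as Hbij.
  eexists. split; [exact Hbij|].
  exact (BI_partition_katetov HI q _ Hq (proj1 Hbij) (fun x => eq_refl)).
Qed.

Lemma sqle_KB_le {X Y} (J : (Y -> Prop) -> Prop) (I : (X -> Prop) -> Prop) :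
  sqle J I -> KB_le J I.
Proof.
  intros [f [[Hinj _] Hf]]. exists f. split; [|exact Hf]. intros y.
  destruct (classic (exists x0, f x0 = y)) as [[x0 Hx0] | Hy].
  - exists [x0]. intros x Hx. left. apply Hinj. congruence.
  - apply finite_set_empty. intros x Hx. eauto.
Qed.

Lemma KB_le_K_le {X Y} (J : (Y -> Prop) -> Prop) (I : (X -> Prop) -> Prop) :
  KB_le J I -> K_le J I.
Proof. intros [f [_ Hf]]. exists f. exact Hf. Qed.

Lemma partition_index {X Ix} (P : Ix -> X -> Prop) :
  is_partition P -> exists h : X -> Ix, forall i x, P i x <-> h x = i.
Proof.
  intros [Hcover Hdisj].
  exists (fun x => proj1_sig (constructive_indefinite_description _ (Hcover x))).
  intros i x. pose proof (proj2_sig (constructive_indefinite_description _ (Hcover x))) as Hx.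
  split; [intros Hi; exact (Hdisj _ _ x Hx Hi) | intros <-; exact Hx].
Qed.

Lemma fibres_partition {X Ix} (f : X -> Ix) : is_partition (fun i x => f x = i).
Proof. split; [intros x; eauto | intros i i' x <- <-; reflexivity]. Qed.

Definition partition_property {X} (I : (X -> Prop) -> Prop) : Prop :=
  forall P : nat * nat -> X -> Prop,
    is_partition P -> (forall ij, I (P ij)) ->
    exists A : X -> Prop, ~ I A /\
      (forall ij, finite_set (fun x => A x /\ P ij x)) /\
      finite_set (fun i => ~ finite_set (fun x => A x /\ exists j, P (i, j) x)).

Definition function_property {X} (I : (X -> Prop) -> Prop) : Prop :=
  forall f : X -> nat * nat,
    exists A : X -> Prop, ~ I A /\
      Fin2 (fun y => exists x, A x /\ f x = y) /\
      ((forall x x', A x -> A x' -> f x = f x') \/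
       (forall y, finite_set (fun x => A x /\ f x = y))).

Section Selection.

Context {X : Type} {I : (X -> Prop) -> Prop} (HI : is_ideal I).

Lemma partition_property_iff : partition_property I <-> ~ exists h, BI_partition I h.
Proof.
  split.
  - intros Hiv [h [Hfib Hthin]].
    destruct (Hiv _ (fibres_partition h) Hfib) as [A [HA [HAfib HArows]]].
    apply HA, Hthin. split; [exact HAfib|].
    apply (finite_set_subset _ _ HArows). intros i Hi.
    apply (infinite_set_superset _ _ Hi). intros x [Hx Hxi]. split; [exact Hx|].
    exists (snd (h x)). rewrite <- Hxi. apply surjective_pairing.
  - intros Hno P Hpart HP. destruct (partition_index P Hpart) as [h Hh].
    apply NNPP. intros Hnone. apply Hno. exists h. split.
    + intros p. apply (ideal_subset HI _ _ (HP p)). intros x Hx. apply Hh, Hx.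
    + intros A [HAfib HArows]. apply NNPP. intros HA. apply Hnone.
      exists A. split; [exact HA | split].
      * intros p. apply (finite_set_subset _ _ (HAfib p)).
        intros x [Hx Hxp]. split; [exact Hx | apply Hh, Hxp].
      * apply (finite_set_subset _ _ HArows). intros i Hi.
        apply (infinite_set_superset _ _ Hi). intros x [Hx [j Hxj]]. split; [exact Hx|].
        apply Hh in Hxj. rewrite Hxj. reflexivity.
Qed.

Lemma function_property_iff : function_property I <-> ~ exists h, BI_partition I h.
Proof.
  split.
  - intros Hv [h [Hfib Hthin]]. destruct (Hv h) as [A [HA [Himage [Hconst | Hfin]]]].
    + destruct (classic (exists x0, A x0)) as [[x0 Hx0] | Hempty].
      * apply HA, (ideal_subset HI _ _ (Hfib (h x0))). intros x Hx. apply Hconst; assumption.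
      * apply HA, (ideal_finite HI), finite_set_empty. eauto.
    + apply HA, Hthin. split; [exact Hfin|].
      apply (finite_set_subset _ _ Himage). intros i Hi [lj Hlj]. apply Hi.
      apply finite_set_subset with (A := fun x => exists j, In j lj /\ A x /\ h x = (i, j)).
      * apply finite_set_list_union. intros j _. apply Hfin.
      * intros x [Hx Hxi].
        assert (Hhx : h x = (i, snd (h x))) by (rewrite <- Hxi; apply surjective_pairing).
        exists (snd (h x)). split; [apply Hlj; exists x|]; split; assumption.
  - intros Hno f.
    destruct (classic (exists p, ~ I (fun x => f x = p))) as [[p Hp] | Hall].
    + exists (fun x => f x = p). split; [exact Hp | split; [| left; congruence]].
      exists [fst p]. intros n Hn. left. apply NNPP. intros Hne. apply Hn, finite_set_empty.
      intros m [x [Hx Hxm]]. apply Hne. rewrite <- Hx, Hxm. reflexivity.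
    + apply partition_property_iff in Hno.
      destruct (Hno _ (fibres_partition f)) as [A [HA [HAfib HArows]]].
      { intros p. apply NNPP. intros Hp. apply Hall. eauto. }
      exists A. split; [exact HA | split; [| right; exact HAfib]].
      apply (finite_set_subset _ _ HArows). intros i Hi Hfin. apply Hi.
      apply finite_set_subset with
        (A := fun m => exists x, (A x /\ exists j, f x = (i, j)) /\ snd (f x) = m).
      * apply finite_set_image, Hfin.
      * intros m [x [Hx Hxm]]. exists x. rewrite Hxm. eauto.
Qed.

End Selection.

Theorem proposition4p4 (X : Type) (I : (X -> Prop) -> Prop)
  (HX : countably_infinite X) (HI : is_ideal I) :
  let c1 := ~ K_le BI I in
  let c2 := ~ KB_le BI I in
  let c3 := ~ sqle BI I in
  let c4 :=
    forall P : nat * nat -> X -> Prop,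
      is_partition P -> (forall ij, I (P ij)) ->
      exists A : X -> Prop, ~ I A /\
        (forall ij, finite_set (fun x => A x /\ P ij x)) /\
        finite_set (fun i => ~ finite_set (fun x => A x /\ exists j, P (i, j) x)) in
  let c5 :=
    forall f : X -> nat * nat,
      exists A : X -> Prop, ~ I A /\
        Fin2 (fun y => exists x, A x /\ f x = y) /\
        ((forall x x', A x -> A x' -> f x = f x') \/
         (forall y, finite_set (fun x => A x /\ f x = y))) in
  (c1 <-> c2) /\ (c1 <-> c3) /\ (c1 <-> c4) /\ (c1 <-> c5).
Proof.
  intros c1 c2 c3 c4 c5.
  change c4 with (partition_property I). change c5 with (function_property I).
  rewrite (partition_property_iff HI), (function_property_iff HI).
  assert (HK : K_le BI I -> exists h, BI_partition I h).
  { intros [f Hf]. exists (fun x => fst (f x)). exact (katetov_BI_partition HI f Hf). }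
  assert (Hsq : (exists h, BI_partition I h) -> sqle BI I).
  { intros [h Hh]. exact (BI_partition_sqle h HX HI Hh). }
  pose proof (sqle_KB_le BI I). pose proof (KB_le_K_le BI I).
  unfold c1, c2, c3. tauto.
Qed.
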